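(* For every odd positive integer $m$, the set of nonnegative integers $s$ such that $m\nmid \binom{2^{s+1}}{2^s}$ has asymptotic density $0$; that is, $\#\{0\le s<a : m\nmid \binom{2^{s+1}}{2^s}\}/a\to 0$ as $a\to\infty$. *)

From Stdlib Require Import Reals.
From mathcomp Require Import all_boot.
Definition bad_count (m a : nat) : nat :=
  count (fun s => ~~ (m %| 'C(2 ^ s.+1, 2 ^ s))) (iota 0 a).

From Stdlib Require Import Reals Lra ZArith.
From mathcomp Require Import all_boot.
From mathcomp Require Import zify ring.

Set Implicit Arguments.
Unset Strict Implicit.
Unset Printing Implicit Defensive.

(* Let n = 2 ^ s. If m does not divide 'C(2n, n), then some prime p of m has
   v_p('C(2n, n)) < v_p(m) =: e.  By Kummer, v_p('C(2n, n)) counts the base-p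
   digit positions at which doubling n carries, so among e consecutive blocks of
   B positions one block sees no carry at all.  Lifting the exponent, 2 has
   order D * p ^ i modulo p ^ (t + i); along each step of this tower the next
   base-p digit of 2 ^ s moves through an arithmetic progression with unit
   step, and "no carry" confines it to the lower half of the digits.  Hence the
   density of s whose given block carries nowhere is at most
   ((p + 1) / 2p) ^ B <= (2 / 3) ^ B, and the density of bad s is at most
   (\sum_p v_p(m)) * (2 / 3) ^ B for every B. *)

Lemma count_iota_sum (a : pred nat) m n :
  count a (iota m n) = \sum_(m <= i < m + n) a i.
Proof.
rewrite -sum1_count big_mkcond /index_iota addKn.
by apply: eq_bigr => i _; case: (a i).
Qed.

Lemma sum_nat_blocks (F : nat -> nat) P k :
  \sum_(0 <= i < P * k) F i = \sum_(0 <= c < k) \sum_(0 <= i < P) F (i + P * c).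
Proof.
elim: k => [|k IHk]; first by rewrite muln0 !big_geq.
rewrite big_nat_recr //= -IHk mulnS addnC (big_cat_nat _ (leq_addr _ _)) //=.
by congr (_ + _); rewrite -{1}[P * k]add0n big_addn addKn.
Qed.

Lemma sum_periodic_le (F : nat -> nat) P a : 0 < P -> (forall i, F (i + P) = F i) ->
  \sum_(0 <= i < a) F i <= (a %/ P).+1 * \sum_(0 <= i < P) F i.
Proof.
move=> P_gt0 F_per.
have F_perM c i : F (i + P * c) = F i.
  by elim: c => [|c IHc]; rewrite ?muln0 ?addn0 // mulnS addnCA addnC F_per IHc.
have a_le : a <= P * (a %/ P).+1 by rewrite mulnC ltnW // ltn_ceil.
rewrite (leq_trans (_ : _ <= \sum_(0 <= i < P * (a %/ P).+1) F i)) //.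
  by rewrite (big_cat_nat (leq0n a) a_le) /= leq_addr.
rewrite sum_nat_blocks.
under eq_bigr do under eq_bigr do rewrite F_perM.
by rewrite sum_nat_const_nat subn0.
Qed.

Lemma count_le_sum_count (I : Type) (a : pred nat) (b : I -> pred nat) (r : seq I) s :
    (forall x, a x -> has (fun i => b i x) r) ->
  count a s <= \sum_(i <- r) count (b i) s.
Proof.
move=> a_cover; apply: leq_trans (sub_count a_cover s) _; clear a_cover.
elim: r => [|i r IHr]; first by rewrite count_pred0.
rewrite big_cons (leq_trans _ (leq_add (leqnn (count (b i) s)) IHr)) //.
by rewrite -count_predUI leq_addr.
Qed.

Lemma count_le_inj (a : pred nat) (f : nat -> nat) n h :
    {in iota 0 n &, injective f} -> (forall c, c < n -> a c -> f c < h) ->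
  count a (iota 0 n) <= h.
Proof.
move=> f_inj f_lt; rewrite -size_filter -(size_map f) -[h](size_iota 0).
apply: uniq_leq_size.
  rewrite map_inj_in_uniq ?filter_uniq ?iota_uniq //.
  by move=> c1 c2; rewrite !mem_filter => /andP[_ c1n] /andP[_ c2n]; apply: f_inj.
move=> d /mapP[c]; rewrite mem_filter mem_iota => /andP[ac /= c_lt_n] ->.
by rewrite mem_iota f_lt.
Qed.

Lemma expn1D_cubic x n :
  exists c, (1 + x) ^ n = 1 + n * x + 'C(n, 2) * x ^ 2 + x ^ 3 * c.
Proof.
elim: n => [|n [c IHn]]; first by exists 0; rewrite expn0 !muln0 !mul0n !addn0.
exists ('C(n, 2) + c + c * x).
rewrite expnS IHn binS bin1; ring.
Qed.

Lemma odd_prime_ndvd_exp2 s p : prime p -> odd p -> ~~ (p %| 2 ^ s).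
Proof.
by move=> p_pr p_odd; rewrite Euclid_dvdX // dvdn_prime2 //; case: eqP p_odd => // ->.
Qed.

Lemma lift_exponent_step p k v : prime p -> odd p -> ~~ (p %| v) ->
  exists2 w, (1 + p ^ k.+1 * v) ^ p = 1 + p ^ k.+2 * w & ~~ (p %| w).
Proof.
move=> p_pr p_odd p_ndvd_v.
have [c ->] := expn1D_cubic (p ^ k.+1 * v) p.
have bin2p : 'C(p, 2) = p * p./2.
  by rewrite bin2 -{2}(odd_double_half p) p_odd -doubleMr half_double.
exists (v + p * (p./2 * p ^ k * v ^ 2 + p ^ k * p ^ k * v ^ 3 * c)).
  by rewrite bin2p !expnS; ring.
by rewrite dvdn_addl ?p_ndvd_v // dvdn_mulr.
Qed.

Lemma lift_exponent p x D t u : prime p -> odd p -> 0 < t ->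
    x ^ D = 1 + p ^ t * u -> ~~ (p %| u) ->
  forall i, exists2 v, x ^ (D * p ^ i) = 1 + p ^ (t + i) * v & ~~ (p %| v).
Proof.
move=> p_pr p_odd t_gt0 xD p_ndvd_u; elim=> [|i [v xDi p_ndvd_v]].
  by exists u; rewrite ?expn0 ?muln1 ?addn0.
have [w xDi1 p_ndvd_w] := lift_exponent_step (t + i).-1 p_pr p_odd p_ndvd_v.
exists w => //.
rewrite expnS mulnCA mulnC expnM xDi -(prednK (ltn_addr i t_gt0)) xDi1.
by rewrite addnS prednK // ltn_addr.
Qed.

Lemma exp2_pfactor_decomp p : prime p -> odd p ->
  exists D t u, [/\ 0 < D, 0 < t, 2 ^ D = 1 + p ^ t * u & ~~ (p %| u)].
Proof.
move=> p_pr p_odd.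
have p_gt2 : 2 < p by rewrite ltn_neqAle prime_gt1 // andbT; apply: contraTneq p_odd => <-.
have D_gt0 : 0 < p.-1 by lia.
have exp2_gt1 : 1 < 2 ^ p.-1 by rewrite -[1](expn0 2) ltn_exp2l.
have p_dvd : p %| 2 ^ p.-1 - 1.
  have := fermat_little 2 p_pr; rewrite -{1}(prednK (prime_gt0 p_pr)) expnS => /eqP.
  rewrite -[X in _ == X %[mod _]](muln1 2) eqn_mod_dvd ?leq_mul2l ?expn_gt0 //.
  have := odd_prime_ndvd_exp2 1 p_pr p_odd; rewrite expn1 => /negbTE p_ndvd2.
  by rewrite -mulnBr Euclid_dvdM // p_ndvd2.
have exp2_sub_gt0 : 0 < 2 ^ p.-1 - 1 by rewrite subn_gt0.
have [u p_coprime_u decomp] := pfactor_coprime p_pr exp2_sub_gt0.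
exists p.-1, (logn p (2 ^ p.-1 - 1)), u; split.
- exact: D_gt0.
- by rewrite logn_gt0 mem_primes p_pr exp2_sub_gt0.
- by rewrite [_ * u]mulnC -decomp subnKC // ltnW.
- by rewrite -prime_coprime.
Qed.

Lemma expn_period_mod x p j v P k s c : x ^ P = 1 + p ^ j * v -> k <= j ->
  x ^ (s + P * c) = x ^ s %[mod p ^ k].
Proof.
move=> xP k_le_j; have pk_dvd_pj : p ^ k %| p ^ j := dvdn_exp2l p k_le_j.
have xPc_mod : (1 + p ^ j * v) ^ c = 1 %[mod p ^ j].
  by rewrite -modnXm addnC mulnC modnMDl modnXm exp1n.
rewrite expnD expnM xP -(modn_dvdm _ pk_dvd_pj) -modnMmr xPc_mod modnMmr muln1.
exact: modn_dvdm.
Qed.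

Lemma expn_orbit_expansion x p j v P s c : 0 < j -> x ^ P = 1 + p ^ j * v ->
  exists W, x ^ (s + P * c) = (x ^ s * c * v + p * W) * p ^ j + x ^ s.
Proof.
case: j => [|k] // _ xP; have [z binom] := expn1D_cubic (p ^ k.+1 * v) c.
exists (x ^ s * ('C(c, 2) * p ^ k * v ^ 2 + p ^ k * p ^ k * p * v ^ 3 * z)).
by rewrite expnD expnM xP binom !expnS; ring.
Qed.

Lemma affine_modn_inj p a b : prime p -> ~~ (p %| b) ->
  {in iota 0 p &, injective (fun c => (a + b * c) %% p)}.
Proof.
move=> p_pr p_ndvd_b.
have inj_le c1 c2 : c1 < p -> c2 <= c1 -> (a + b * c1) %% p = (a + b * c2) %% p -> c1 = c2.
  move=> c1_lt_p c2_le_c1 /eqP.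
  rewrite eqn_modDl eqn_mod_dvd ?leq_mul2l ?c2_le_c1 ?orbT // -mulnBr Euclid_dvdM //.
  have diff_lt_p : c1 - c2 < p by lia.
  rewrite (negbTE p_ndvd_b) /= /dvdn modn_small // subn_eq0 => c1_le_c2.
  by apply/eqP; rewrite eqn_leq c1_le_c2.
move=> c1 c2; rewrite !mem_iota /= => c1_lt_p c2_lt_p eq_mod.
by case: (leqP c2 c1) => [|/ltnW] c_le; [apply: inj_le | apply/esym/inj_le].
Qed.

(* [carry p k n]: adding n to itself in base p carries out of the k lowest digits. *)
Definition carry p k n := p ^ k <= 2 * (n %% p ^ k).

Lemma carry_mod p k m n : m = n %[mod p ^ k] -> carry p k m = carry p k n.
Proof. by rewrite /carry => ->. Qed.

Lemma logn_fact_sum p n M : prime p -> n < M ->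
  logn p n`! = \sum_(1 <= k < M) n %/ p ^ k.
Proof.
move=> p_pr n_lt_M; rewrite logn_fact // (big_cat_nat _ n_lt_M) //=.
rewrite [X in _ + X]big1_seq ?addn0 // => k /andP[_]; rewrite mem_index_iota => /andP[n_lt_k _].
by rewrite divn_small // (leq_trans n_lt_k) // ltnW // ltn_expl // prime_gt1.
Qed.

Lemma divn_double_carry p n k : 0 < p ->
  2 * (n %/ p ^ k) + carry p k n <= (n + n) %/ p ^ k.
Proof.
move=> p_gt0; have pk_gt0 : 0 < p ^ k by rewrite expn_gt0 p_gt0.
have -> : n + n = 2 * (n %/ p ^ k) * p ^ k + 2 * (n %% p ^ k).
  by rewrite {1 2}(divn_eq n (p ^ k)); ring.
by rewrite divnMDl // leq_add2l /carry; case: (leqP (p ^ k)) => // h; rewrite divn_gt0.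
Qed.

Lemma count_carry_le_logn_bin p n K : prime p ->
  count (fun k => carry p k n) (iota 1 K) <= logn p 'C(n + n, n).
Proof.
move=> p_pr; set M := K.+1 + (n + n).+1.
have logn_bin : logn p 'C(n + n, n) = logn p (n + n)`! - 2 * logn p n`!.
  rewrite -(bin_fact (leq_addr n n)) addnK.
  by rewrite !lognM ?bin_gt0 ?leq_addr ?muln_gt0 ?fact_gt0 //; lia.
have n2_lt_M : n + n < M by rewrite /M; lia.
have n_lt_M : n < M by rewrite /M; lia.
rewrite logn_bin !(@logn_fact_sum p _ M) //.
have sum_bound : \sum_(1 <= k < M) (2 * (n %/ p ^ k) + carry p k n)
                 <= \sum_(1 <= k < M) (n + n) %/ p ^ k.
  by apply: leq_sum => k _; apply: divn_double_carry; apply: prime_gt0.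
rewrite big_split /= -big_distrr /= in sum_bound.
have count_le : count (fun k => carry p k n) (iota 1 K) <= \sum_(1 <= k < M) carry p k n.
  by rewrite count_iota_sum (big_cat_nat _ (_ : 1 + K <= M)) //= leq_addr.
lia.
Qed.

Lemma digit_lt_nocarry p j n : 0 < p -> ~~ carry p j.+1 n -> 2 * (n %/ p ^ j %% p) < p.
Proof.
move=> p_gt0; rewrite /carry -ltnNge => nocarry.
have pj_gt0 : 0 < p ^ j by rewrite expn_gt0 p_gt0.
have digitE : n %% p ^ j.+1 %/ p ^ j = n %/ p ^ j %% p.
  by rewrite divn_modl ?expnS ?dvdn_mull // mulnK.
rewrite -(ltn_pmul2r pj_gt0) -mulnA -digitE -expnS.
apply: leq_ltn_trans nocarry; rewrite leq_mul2l.
by rewrite leq_divM orbT.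
Qed.

Lemma count_nocarry_orbit p j P v s : prime p -> odd p -> 0 < j ->
    2 ^ P = 1 + p ^ j * v -> ~~ (p %| v) ->
  count (fun c => ~~ carry p j.+1 (2 ^ (s + P * c))) (iota 0 p) <= p./2.+1.
Proof.
move=> p_pr p_odd j_gt0 exp2P p_ndvd_v.
have pj_gt0 : 0 < p ^ j by rewrite expn_gt0 prime_gt0.
(* digit j of 2 ^ (s + P * c) in base p; its step 2 ^ s * v is a unit mod p. *)
pose digit c := (2 ^ s %/ p ^ j + 2 ^ s * v * c) %% p.
have digitE c : 2 ^ (s + P * c) %/ p ^ j %% p = digit c.
  have [W ->] := expn_orbit_expansion s c j_gt0 exp2P.
  rewrite divnMDl // /digit.
  have -> : 2 ^ s * c * v + p * W + 2 ^ s %/ p ^ j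
          = W * p + (2 ^ s %/ p ^ j + 2 ^ s * v * c) by ring.
  by rewrite modnMDl.
apply: (@count_le_inj _ digit).
  by apply: affine_modn_inj; rewrite // Euclid_dvdM // negb_or odd_prime_ndvd_exp2.
move=> c _ /(digit_lt_nocarry (prime_gt0 p_pr)); rewrite digitE.
have := odd_double_half p; rewrite p_odd -mul2n; lia.
Qed.

Definition nocarry_block p lo B n := all (fun k => ~~ carry p k n) (iota lo.+1 B).

Lemma nocarry_blockS p lo B n :
  nocarry_block p lo B.+1 n = nocarry_block p lo B n && ~~ carry p (lo + B).+1 n.
Proof. by rewrite /nocarry_block -[B.+1]addn1 iotaD all_cat /= andbT addSn. Qed.

Lemma nocarry_block_period x p j v P lo B s c : x ^ P = 1 + p ^ j * v -> lo + B <= j ->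
  nocarry_block p lo B (x ^ (s + P * c)) = nocarry_block p lo B (x ^ s).
Proof.
move=> xP le_j; apply: eq_in_all => k; rewrite mem_iota => /andP[_ k_lt].
by rewrite (carry_mod (expn_period_mod s c xP _)) //; lia.
Qed.

Lemma count_carry_blocks p t B e n :
    (forall b, b < e -> ~~ nocarry_block p (t + b * B) B n) ->
  e <= count (fun k => carry p k n) (iota t.+1 (e * B)).
Proof.
elim: e => [|e IHe] carry_in_blocks //.
rewrite mulSnr iotaD count_cat -addn1 leq_add //.
  by apply: IHe => b b_lt; apply/carry_in_blocks/ltnW.
rewrite -has_count; have /allPn[k k_in carry_k] := carry_in_blocks e (ltnSn e).
by apply/hasP; exists k; rewrite -?addSn // -(negbK (carry p k n)).
Qed.

Lemma nocarry_block_of_logn_bin p t B e n : prime p ->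
    logn p 'C(n + n, n) < e ->
  has (fun b => nocarry_block p (t + b * B) B n) (iota 0 e).
Proof.
move=> p_pr logn_lt; apply/negPn/negP => /hasPn no_block.
have carries : e <= count (fun k => carry p k n) (iota t.+1 (e * B)).
  by apply: count_carry_blocks => b b_lt; apply: no_block; rewrite mem_iota.
have := count_carry_le_logn_bin n (t + e * B) p_pr.
rewrite iotaD count_cat add1n => /(leq_trans (leq_addl _ _)) /(leq_trans carries).
by rewrite leqNgt logn_lt.
Qed.

Section NocarryBlockDensity.

Variables p D t : nat.
Hypotheses (p_pr : prime p) (p_odd : odd p) (D_gt0 : 0 < D) (t_gt0 : 0 < t).
Hypothesis exp2_lift :
  forall i, exists2 v, 2 ^ (D * p ^ i) = 1 + p ^ (t + i) * v & ~~ (p %| v).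

Lemma sum_nocarry_block_period n0 B :
  \sum_(0 <= s < D * p ^ (n0 + B)) nocarry_block p (t + n0) B (2 ^ s)
    <= p./2.+1 ^ B * (D * p ^ n0).
Proof.
elim: B => [|B IHB].
  by rewrite addn0 expn0 mul1n sum_nat_const_nat subn0 muln1.
have [v exp2P p_ndvd_v] := exp2_lift (n0 + B); rewrite addnA in exp2P.
set P := D * p ^ (n0 + B) in exp2P *.
have -> : D * p ^ (n0 + B.+1) = P * p by rewrite /P addnS expnS; ring.
rewrite sum_nat_blocks exchange_big_nat /=.
under eq_bigr => s _ do under eq_bigr => c _ do
  rewrite nocarry_blockS (nocarry_block_period s c exp2P) //.
apply: leq_trans (_ : \sum_(0 <= s < P) nocarry_block p (t + n0) B (2 ^ s) * p./2.+1 <= _).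
  apply: leq_sum => s _; case: (nocarry_block _ _ _ _) => /=; last by rewrite big1.
  rewrite mul1n -(count_iota_sum (fun c => ~~ carry p _ (2 ^ (s + P * c))) 0 p).
  by apply: (count_nocarry_orbit s p_pr p_odd _ exp2P p_ndvd_v); rewrite !addn_gt0 t_gt0.
by rewrite -big_distrl /= expnS -mulnA mulnC leq_mul2l IHB orbT.
Qed.

Lemma count_nocarry_block_le n0 B a :
  3 ^ B * count (fun s => nocarry_block p (t + n0) B (2 ^ s)) (iota 0 a)
    <= 2 ^ B * a + 3 ^ B * (p./2.+1 ^ B * (D * p ^ n0)).
Proof.
set X := D * p ^ n0; set h := p./2.+1.
have [v exp2P _] := exp2_lift (n0 + B); set P := D * p ^ (n0 + B) in exp2P *.
have P_gt0 : 0 < P by rewrite muln_gt0 D_gt0 expn_gt0 prime_gt0.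
have count_le : count (fun s => nocarry_block p (t + n0) B (2 ^ s)) (iota 0 a)
                  <= (a %/ P).+1 * (h ^ B * X).
  rewrite count_iota_sum add0n; apply: leq_trans (sum_periodic_le _ P_gt0 _) _.
    by move=> s; rewrite -[P]muln1 (nocarry_block_period s 1 exp2P) // addnA.
  by rewrite leq_mul2l sum_nocarry_block_period orbT.
(* The ratio 2 / 3 of the density bound comes from this inequality. *)
have h3_le : 3 * h <= 2 * p.
  have := odd_double_half p; have := prime_gt1 p_pr; rewrite p_odd -mul2n /h; lia.
have pow_le : (3 * h) ^ B <= (2 * p) ^ B by elim: (B) => // B' IH; rewrite !expnS leq_mul.
rewrite (leq_trans (leq_mul (leqnn _) count_le)) // mulSn mulnDr addnC leq_add2r.
have -> : 3 ^ B * (a %/ P * (h ^ B * X)) = a %/ P * X * (3 * h) ^ B by rewrite expnMn; ring.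
apply: leq_trans (_ : a %/ P * X * (2 * p) ^ B <= _); first by rewrite leq_mul2l pow_le orbT.
have PE : X * p ^ B = P by rewrite /P /X expnD mulnA.
have -> : a %/ P * X * (2 * p) ^ B = 2 ^ B * (a %/ P * (X * p ^ B)) by rewrite expnMn; ring.
by rewrite PE leq_mul2l leq_divM orbT.
Qed.

End NocarryBlockDensity.

Lemma count_small_logn_bin p e B : prime p -> odd p -> exists C, forall a,
  3 ^ B * count (fun s => logn p 'C(2 ^ s.+1, 2 ^ s) < e) (iota 0 a) <= e * 2 ^ B * a + C.
Proof.
move=> p_pr p_odd; have [D [t [u [D_gt0 t_gt0 exp2D p_ndvd_u]]]] := exp2_pfactor_decomp p_pr p_odd.
have exp2_lift := lift_exponent p_pr p_odd t_gt0 exp2D p_ndvd_u.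
exists (\sum_(b <- iota 0 e) 3 ^ B * (p./2.+1 ^ B * (D * p ^ (b * B)))) => a.
apply: leq_trans (_ : 3 ^ B * \sum_(b <- iota 0 e)
    count (fun s => nocarry_block p (t + b * B) B (2 ^ s)) (iota 0 a) <= _).
  rewrite leq_mul2l; apply/orP; right; apply: count_le_sum_count => s.
  by rewrite expnS mul2n -addnn; apply: nocarry_block_of_logn_bin.
have -> : e * 2 ^ B * a = \sum_(b <- iota 0 e) 2 ^ B * a.
  by rewrite big_const_seq count_predT size_iota iter_addn_0; ring.
rewrite big_distrr -big_split /=; apply: leq_sum => b _.
exact: count_nocarry_block_le.
Qed.

Lemma sum_le_offset (I : eqType) (r : seq I) (f g : I -> nat -> nat) :
    (forall i, i \in r -> exists C, forall a, f i a <= g i a + C) ->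
  exists C, forall a, \sum_(i <- r) f i a <= \sum_(i <- r) g i a + C.
Proof.
elim: r => [|i r IHr] f_le; first by exists 0 => a; rewrite !big_nil.
have [C1 le1] := f_le i (mem_head i r).
have [C2 le2] : exists C, forall a, \sum_(j <- r) f j a <= \sum_(j <- r) g j a + C.
  by apply: IHr => j j_in; apply: f_le; rewrite in_cons j_in orbT.
exists (C1 + C2) => a; rewrite !big_cons.
by rewrite addnACA leq_add.
Qed.

Lemma ndvdn_logn_lt m n : 0 < m -> 0 < n -> ~~ (m %| n) ->
  has (fun p => logn p n < logn p m) (primes m).
Proof.
move=> m_gt0 n_gt0; apply: contraR => /hasPn logn_le; apply/dvdn_partP => // p p_in.
have p_pr : prime p by move: p_in; rewrite mem_primes => /andP[].
by rewrite p_part pfactor_dvdn // leqNgt logn_le.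
Qed.

Lemma bad_count_le m B : 0 < m -> odd m -> exists C, forall a,
  3 ^ B * bad_count m a <= (\sum_(p <- primes m) logn p m) * 2 ^ B * a + C.
Proof.
move=> m_gt0 m_odd.
have [C le_C] : exists C, forall a,
    \sum_(p <- primes m) 3 ^ B * count (fun s => logn p 'C(2 ^ s.+1, 2 ^ s) < logn p m) (iota 0 a)
      <= \sum_(p <- primes m) logn p m * 2 ^ B * a + C.
  apply: sum_le_offset => p; rewrite mem_primes => /and3P[p_pr _ p_dvd].
  apply: count_small_logn_bin => //; apply: contraTT m_odd; rewrite -!dvdn2.
  by move/dvdn_trans; apply.
exists C => a; rewrite !big_distrl /=; apply: leq_trans (le_C a).
rewrite -big_distrr leq_mul2l /bad_count; apply/orP; right.
apply: count_le_sum_count => s; apply: ndvdn_logn_lt m_gt0 _.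
by rewrite bin_gt0 leq_pexp2l.
Qed.

Lemma INR_unbounded (z : R) : exists N, forall a, N <= a -> Rlt z (INR a).
Proof.
have [up_gt _] := archimed z.
exists (Z.abs_nat (up z)) => a /leP N_le_a.
have up_le : Rle (IZR (up z)) (INR (Z.abs_nat (up z))).
  by rewrite INR_IZR_INZ Zabs2Nat.id_abs; apply: IZR_le; lia.
have := le_INR _ _ N_le_a; lra.
Qed.

Lemma INR_expn x n : INR (x ^ n) = pow (INR x) n.
Proof. by elim: n => [|n IHn]; rewrite ?expnS ?mult_INR ?IHn. Qed.

Lemma density_zero_of_geometric_bound (f : nat -> nat) (E b q : nat) : b < q ->
    (forall B, exists C, forall a, q ^ B * f a <= E * b ^ B * a + C) ->
  forall eps, Rlt 0 eps ->
    exists N, forall a, N <= a -> 0 < a -> Rlt (Rdiv (INR (f a)) (INR a)) eps.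
Proof.
move=> b_lt_q f_bound eps eps_gt0.
have q_gt0 : Rlt 0 (INR q) by apply/lt_0_INR/ltP; apply: leq_ltn_trans b_lt_q.
have b_lt_q' : Rlt (INR b) (INR q) by apply/lt_INR/ltP.
have b_ge0 := pos_INR b; have E_ge0 := pos_INR E.
set r := Rdiv (INR b) (INR q).
have r_q : Rmult r (INR q) = INR b by rewrite /r /Rdiv Rmult_assoc Rinv_l ?Rmult_1_r; lra.
have r_ge0 : Rle 0 r by nra.
have r_lt1 : Rlt r 1 by nra.
set y := Rdiv eps (Rmult 2 (Rplus (INR E) 1)).
have y_E : Rmult y (Rmult 2 (Rplus (INR E) 1)) = eps.
  by rewrite /y /Rdiv Rmult_assoc Rinv_l ?Rmult_1_r; lra.
have [B rB_lt] : exists B, Rlt (pow r B) y.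
  have [B rB_small] := pow_lt_1_zero r ltac:(rewrite Rabs_pos_eq; lra) y ltac:(nra).
  by exists B; move: (rB_small B (le_n B)); rewrite Rabs_pos_eq //; apply: pow_le.
have rB_ge0 : Rle 0 (pow r B) := pow_le r B r_ge0.
have qB_ge1 : Rle 1 (pow (INR q) B).
  by apply: pow_R1_Rle; apply: (le_INR 1); apply/leP; apply: leq_ltn_trans b_lt_q.
have bB : pow (INR b) B = Rmult (pow (INR q) B) (pow r B).
  by rewrite -r_q Rpow_mult_distr Rmult_comm.
have [C f_le] := f_bound B.
have [N N_large] := INR_unbounded (Rdiv (Rmult 2 (INR C)) eps).
exists N => a N_le_a a_gt0.
have a_gt0' : Rlt 0 (INR a) by apply/lt_0_INR/ltP.
have C_lt : Rlt (Rmult 2 (INR C)) (Rmult eps (INR a)).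
  have := Rmult_lt_compat_l eps _ _ eps_gt0 (N_large a N_le_a).
  by rewrite /Rdiv Rmult_comm Rmult_assoc Rinv_l ?Rmult_1_r //; lra.
have fa_le := le_INR _ _ (elimT leP (f_le a)).
rewrite plus_INR !mult_INR !INR_expn bB in fa_le.
have C_ge0 := pos_INR C.
have fa_le' : Rle (INR (f a)) (Rplus (Rmult (Rmult (INR E) (pow r B)) (INR a)) (INR C)).
  apply: (Rmult_le_reg_l (pow (INR q) B)); first lra.
  have : Rle (INR C) (Rmult (pow (INR q) B) (INR C)) by nra.
  nra.
have Ey : Rle (Rmult (INR E) (pow r B)) (Rdiv eps 2) by nra.
apply: (Rmult_lt_reg_r (INR a)) => //.
rewrite /Rdiv Rmult_assoc Rinv_l; nra.
Qed.

Theorem corollary3p3 (m : nat) (hm0 : 0 < m) (hodd : odd m) :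
  forall eps : R, Rlt 0 eps ->
    exists N : nat, forall a : nat, N <= a -> 0 < a ->
      Rlt (Rdiv (INR (bad_count m a)) (INR a)) eps.
Proof.
apply: (@density_zero_of_geometric_bound _ (\sum_(p <- primes m) logn p m) 2 3) => // B.
exact: bad_count_le.
Qed.
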